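(* Let $G$ be a finite group and $C_2$ the cyclic group of order $2$. Suppose that every torsion unit of $V(\mathbb{Z}G)$ is conjugate within $\mathbb{Q}G$ to an element of $G$. Then every torsion unit of $V(\mathbb{Z}[G \times C_2])$ is conjugate within $\mathbb{Q}[G \times C_2]$ to an element of $G \times C_2$.
   Context: For a finite group $H$, $V(\mathbb{Z}H)$ denotes the group of units of augmentation $1$ of the integral group ring $\mathbb{Z}H$, where the augmentation of $\sum_h \alpha_h h$ is $\sum_h \alpha_h$. A torsion unit is a unit of finite order. ''Conjugate within $\mathbb{Q}H$'' means conjugate by a unit of the rational group algebra $\mathbb{Q}H$. *)

(* Integral/rational group rings of a finite group, as
   finitely supported (here: total) coefficient functions {ffun gT -> R}
   with the convolution product. *)
From HB Require Import structures.
From mathcomp Require Import all_boot all_order all_algebra all_fingroup all_solvable.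
Set Implicit Arguments. Unset Strict Implicit. Unset Printing Implicit Defensive.
Import GRing.Theory.
Local Open Scope ring_scope.

Section GroupRing.
Variables (R : nzRingType) (gT : finGroupType).

Definition grElt := {ffun gT -> R}.

Definition gr_mul (a b : grElt) : grElt :=
  [ffun g => \sum_(h : gT) a h * b (h^-1 * g)%g].

Definition gr_of (x : gT) : grElt := [ffun g => (g == x)%:R].

Definition gr_one : grElt := gr_of 1%g.

Definition gr_exp (a : grElt) (n : nat) : grElt := iter n (gr_mul a) gr_one.

Definition gr_aug (a : grElt) : R := \sum_(g : gT) a g.

Definition gr_unit (a : grElt) : Prop :=
  exists b : grElt, gr_mul a b = gr_one /\ gr_mul b a = gr_one.

Definition gr_torsion (a : grElt) : Prop :=
  exists2 n : nat, (0 < n)%N & gr_exp a n = gr_one.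

End GroupRing.

Definition gr_ZtoQ (gT : finGroupType) (a : grElt int gT) : grElt rat gT :=
  [ffun g => (a g)%:~R].

Definition in_VZ (gT : finGroupType) (a : grElt int gT) : Prop :=
  gr_unit a /\ gr_aug a = 1.

Definition QG_conj_to_group (gT : finGroupType) (a : grElt int gT) : Prop :=
  exists (u v : grElt rat gT) (g : gT),
    [/\ gr_mul u v = gr_one rat gT, gr_mul v u = gr_one rat gT &
        gr_mul (gr_mul v (gr_ZtoQ a)) u = gr_of rat g].

Definition torsion_units_rationally_trivial (gT : finGroupType) : Prop :=
  forall a : grElt int gT, in_VZ a -> gr_torsion a -> QG_conj_to_group a.

From HB Require Import structures.
From mathcomp Require Import all_boot all_order all_algebra all_fingroup all_solvable.
From mathcomp Require Import ring zify.
Set Implicit Arguments. Unset Strict Implicit. Unset Printing Implicit Defensive.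
Import GRing.Theory.
Local Open Scope ring_scope.

(* Write c for the generator of C_2 and x = x_0 + x_1 c for x in R[G x C_2].
   The maps x |-> x_0 + x_1 and x |-> x_0 - x_1 are ring morphisms onto RG, and
   over Q they identify Q[G x C_2] with QG x QG.  A torsion unit X of
   V(Z[G x C_2]) thus yields torsion units X_+ and X_- of ZG, of augmentation
   1 and e = +-1, and by hypothesis X_+ ~ g and e X_- ~ h in QG.  Partial
   augmentations are class functions, so the one of X_+ on the class of g is 1;
   since X_+ = X_- mod 2 the one of X_- is odd, hence nonzero, and h is
   conjugate to g.  Lifting the two conjugations gives X ~ (g, c^t) where
   e = (-1)^t. *)

Section GroupRing.
Variables (R : nzRingType) (gT : finGroupType).
Implicit Types (a b c : grElt R gT) (x y : gT).

Lemma gr_mulA a b c : gr_mul (gr_mul a b) c = gr_mul a (gr_mul b c).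
Proof.
apply/ffunP => g; rewrite !ffunE.
under eq_bigr => h _ do rewrite ffunE mulr_suml.
rewrite exchange_big /=; apply: eq_bigr => k _.
rewrite ffunE mulr_sumr (reindex_inj (mulgI k)) /=.
by apply: eq_bigr => l _; rewrite mulKg invMg -mulgA mulrA.
Qed.

Lemma gr_mul1l a : gr_mul (gr_one R gT) a = a.
Proof.
apply/ffunP => g; rewrite ffunE (bigD1 1%g) //= big1 ?addr0.
  by rewrite ffunE eqxx mul1r invg1 mul1g.
by move=> h /negbTE; rewrite ffunE => ->; rewrite mul0r.
Qed.

Lemma gr_ofM x y : gr_mul (gr_of R x) (gr_of R y) = gr_of R (x * y).
Proof.
apply/ffunP => g; rewrite ffunE (bigD1 x) //= big1 ?addr0.
  by rewrite !ffunE eqxx mul1r -(inj_eq (mulgI x)) mulKVg.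
by move=> h /negbTE; rewrite ffunE => ->; rewrite mul0r.
Qed.

Lemma gr_expD a m n : gr_exp a (m + n) = gr_mul (gr_exp a m) (gr_exp a n).
Proof.
elim: m => [|m IHm]; first by rewrite gr_mul1l.
by rewrite addSn /gr_exp /= -!/(gr_exp a _) IHm gr_mulA.
Qed.

Lemma gr_augM a b : gr_aug (gr_mul a b) = gr_aug a * gr_aug b.
Proof.
rewrite /gr_aug mulr_suml; under eq_bigr => g _ do rewrite ffunE.
rewrite exchange_big /=; apply: eq_bigr => h _.
rewrite mulr_sumr (reindex_inj (mulgI h)) /=.
by apply: eq_bigr => k _; rewrite mulKg.
Qed.

Lemma gr_aug1 : gr_aug (gr_one R gT) = 1.
Proof.
rewrite /gr_aug (bigD1 1%g) //= big1 ?addr0; first by rewrite ffunE eqxx.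
by move=> h /negbTE; rewrite ffunE => ->.
Qed.

Definition gr_similar a b :=
  exists u v, [/\ gr_mul u v = gr_one R gT, gr_mul v u = gr_one R gT &
                  gr_mul (gr_mul v a) u = b].

Lemma gr_similar_trans a b c : gr_similar a b -> gr_similar b c -> gr_similar a c.
Proof.
move=> [u [v [uv vu <-]]] [u' [v' [uv' vu' <-]]].
exists (gr_mul u u'), (gr_mul v' v); split.
- by rewrite gr_mulA -(gr_mulA u') uv' gr_mul1l uv.
- by rewrite gr_mulA -(gr_mulA v) vu gr_mul1l vu'.
- by rewrite !gr_mulA.
Qed.

Lemma gr_similar_ofJ x y : gr_similar (gr_of R (x ^ y)) (gr_of R x).
Proof.
exists (gr_of R y^-1), (gr_of R y); rewrite !gr_ofM mulVg mulgV; split=> //.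
by rewrite conjgE !mulgA mulgV mul1g mulgK.
Qed.

Definition partial_aug (C : {set gT}) a : R := \sum_(g in C) a g.

Lemma partial_aug_of C x : partial_aug C (gr_of R x) = (x \in C)%:R.
Proof.
rewrite /partial_aug big_mkcond (bigD1 x) //= big1 ?addr0.
  by rewrite ffunE eqxx; case: (x \in C).
by move=> h /negbTE hx; rewrite ffunE hx; case: (h \in C).
Qed.

Lemma partial_augM C a b :
  partial_aug C (gr_mul a b) =
  \sum_x \sum_y (if (x * y)%g \in C then a x * b y else 0).
Proof.
rewrite /partial_aug; under eq_bigr => g _ do rewrite ffunE.
rewrite exchange_big /=; apply: eq_bigr => x _.
rewrite big_mkcond (reindex_inj (mulgI x)) /=.
by apply: eq_bigr => y _; rewrite mulKg.
Qed.

End GroupRing.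

Section ComGroupRing.
Variables (R : comNzRingType) (gT : finGroupType).
Implicit Types (a b : grElt R gT) (k l : R).

Definition gr_scale k a : grElt R gT := [ffun g => k * a g].

Lemma gr_scaleMl k a b : gr_mul (gr_scale k a) b = gr_scale k (gr_mul a b).
Proof.
apply/ffunP => g; rewrite !ffunE mulr_sumr.
by apply: eq_bigr => h _; rewrite ffunE mulrA.
Qed.

Lemma gr_scaleMr k a b : gr_mul a (gr_scale k b) = gr_scale k (gr_mul a b).
Proof.
apply/ffunP => g; rewrite !ffunE mulr_sumr.
by apply: eq_bigr => h _; rewrite ffunE mulrCA.
Qed.

Lemma gr_scaleA k l a : gr_scale k (gr_scale l a) = gr_scale (k * l) a.
Proof. by apply/ffunP => g; rewrite !ffunE mulrA. Qed.

Lemma gr_scale1 a : gr_scale 1 a = a.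
Proof. by apply/ffunP => g; rewrite ffunE mul1r. Qed.

Lemma gr_scaleK k a : k ^+ 2 = 1 -> gr_scale k (gr_scale k a) = a.
Proof. by move=> kk; rewrite gr_scaleA -expr2 kk gr_scale1. Qed.

Lemma gr_scale_exp k a n : gr_exp (gr_scale k a) n = gr_scale (k ^+ n) (gr_exp a n).
Proof.
elim: n => [|n IHn]; first by rewrite gr_scale1.
by rewrite /gr_exp /= -!/(gr_exp _ _) IHn gr_scaleMl gr_scaleMr gr_scaleA exprS.
Qed.

Lemma gr_scale_aug k a : gr_aug (gr_scale k a) = k * gr_aug a.
Proof. by rewrite /gr_aug mulr_sumr; apply: eq_bigr => g _; rewrite ffunE. Qed.

Lemma partial_aug_scale C k a : partial_aug C (gr_scale k a) = k * partial_aug C a.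
Proof. by rewrite /partial_aug mulr_sumr; apply: eq_bigr => g _; rewrite ffunE. Qed.

Lemma gr_unit_scale k a : k ^+ 2 = 1 -> gr_unit a -> gr_unit (gr_scale k a).
Proof.
move=> kk [b [ab ba]]; exists (gr_scale k b).
by split; rewrite gr_scaleMl gr_scaleMr gr_scaleK.
Qed.

Lemma gr_torsion_scale k a : k ^+ 2 = 1 -> gr_torsion a -> gr_torsion (gr_scale k a).
Proof.
move=> kk [n n_gt0 an1]; exists (n + n)%N; first by rewrite addn_gt0 n_gt0.
by rewrite gr_scale_exp exprD -exprMn -expr2 kk expr1n gr_scale1 gr_expD an1 gr_mul1l.
Qed.

Lemma gr_similar_scale k a b : gr_similar a b -> gr_similar (gr_scale k a) (gr_scale k b).
Proof. by move=> [u [v [uv vu <-]]]; exists u, v; rewrite gr_scaleMr gr_scaleMl. Qed.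

Section ClassFunctional.
Variables (C : {set gT}) (nC : [set: gT] \subset 'N(C)%g).

(* [x * y] and [y * x] are conjugate, so they lie in [C] together. *)
Lemma partial_augC a b : partial_aug C (gr_mul a b) = partial_aug C (gr_mul b a).
Proof.
rewrite !partial_augM exchange_big; apply: eq_bigr => x _; apply: eq_bigr => y _.
have ->: (y * x = (x * y) ^ x)%g by rewrite conjgE mulgA mulKg.
by rewrite memJ_norm ?(subsetP nC) ?inE // mulrC.
Qed.

Lemma partial_aug_similar a b : gr_similar a b -> partial_aug C b = partial_aug C a.
Proof. by move=> [u [v [uv _ <-]]]; rewrite partial_augC -gr_mulA uv gr_mul1l. Qed.

End ClassFunctional.

End ComGroupRing.

Section IntegralGroupRing.
Variable gT : finGroupType.
Implicit Types (a : grElt int gT) (C : {set gT}).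

Lemma gr_ZtoQ_scale (k : int) a : gr_ZtoQ (gr_scale k a) = gr_scale k%:~R (gr_ZtoQ a).
Proof. by apply/ffunP => g; rewrite !ffunE intrM. Qed.

Lemma partial_aug_ZtoQ C a : partial_aug C (gr_ZtoQ a) = (partial_aug C a)%:~R.
Proof. by rewrite /partial_aug rmorph_sum; apply: eq_bigr => g _; rewrite ffunE. Qed.

Lemma QG_conj_to_groupP a :
  QG_conj_to_group a <-> exists g, gr_similar (gr_ZtoQ a) (gr_of rat g).
Proof.
split; first by move=> [u [v [g E]]]; exists g, u, v.
by move=> [g [u [v E]]]; exists u, v, g.
Qed.

Lemma partial_aug_ZtoQ_similar C a x : [set: gT] \subset 'N(C)%g ->
  gr_similar (gr_ZtoQ a) (gr_of rat x) -> partial_aug C a = (x \in C)%:R.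
Proof.
move=> nC sim_ax; apply: (@intr_inj rat).
rewrite -partial_aug_ZtoQ -(partial_aug_similar nC sim_ax) partial_aug_of.
by case: (x \in C).
Qed.

Lemma gr_aug_sign a : gr_unit a -> exists t : 'I_2, gr_aug a = (-1) ^+ t.
Proof.
move=> [b [_ ba]]; have /intUnitRing.unitzPl : gr_aug b * gr_aug a = 1.
  by rewrite -gr_augM ba gr_aug1.
by case/orP => /eqP ->; [exists ord0 | exists ord_max].
Qed.

Lemma in_VZ_scale_aug a : gr_unit a -> in_VZ (gr_scale (gr_aug a) a).
Proof.
move=> unit_a; have [t aug_a] := gr_aug_sign unit_a; rewrite aug_a.
split; last by rewrite gr_scale_aug aug_a -expr2 sqrr_sign.
by apply: gr_unit_scale unit_a; rewrite sqrr_sign.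
Qed.

End IntegralGroupRing.

Section GroupRingTimesC2.
Variables (R : comNzRingType) (gT : finGroupType).
Implicit Types (x y : grElt R (gT * 'I_2)%type) (s : R).

Definition grC2_proj s x : grElt R gT :=
  [ffun g => x (g, ord0) + s * x (g, ord_max)].

Lemma sum_pairI2 (F : (gT * 'I_2)%type -> R) :
  \sum_p F p = \sum_g (F (g, ord0) + F (g, ord_max)).
Proof.
rewrite (eq_bigr (fun p => F (p.1, p.2))); last by case.
rewrite -(pair_bigA _ (fun g t => F (g, t))) /=; apply: eq_bigr => g _.
by rewrite big_ord_recr big_ord1; congr (F (g, _) + _); apply: val_inj.
Qed.

Lemma I2_cases (t : 'I_2) : t = ord0 \/ t = ord_max.
Proof. by case: t => [[|[|//]]] ?; [left | right]; apply: val_inj. Qed.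

Lemma grC2_projM s x y : s ^+ 2 = 1 ->
  grC2_proj s (gr_mul x y) = gr_mul (grC2_proj s x) (grC2_proj s y).
Proof.
move=> ss; apply/ffunP => g; rewrite !ffunE !sum_pairI2 mulr_sumr -big_split /=.
apply: eq_bigr => h _.
have mulVI2 (j k : 'I_2) :
    ((h, j)^-1 * (g, k))%g = ((h^-1 * g)%g, if j == k then ord0 else ord_max).
  by congr (_, _); have [->|->] := I2_cases j; have [->|->] := I2_cases k;
    apply: val_inj.
rewrite !ffunE !mulVI2 /=.
set x0 := x (h, ord0); set x1 := x (h, ord_max).
set y0 := y (_, ord0); set y1 := y (_, ord_max).
(* [ring] cannot use [s ^+ 2 = 1], so it is substituted in by hand. *)
by rewrite -[x1 * y1]mul1r -{1}ss; ring.
Qed.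

Lemma grC2_proj_of s g t : grC2_proj s (gr_of R (g, t)) = gr_scale (s ^+ t) (gr_of R g).
Proof.
apply/ffunP => h; rewrite !ffunE !xpair_eqE.
have [->|->] /= := I2_cases t; by case: (h == g); rewrite /= ?eqxx; ring.
Qed.

Lemma grC2_proj_one s : grC2_proj s (gr_one R (gT * 'I_2)%type) = gr_one R gT.
Proof. by rewrite /gr_one grC2_proj_of gr_scale1. Qed.

Lemma grC2_proj_aug x : gr_aug (grC2_proj 1 x) = gr_aug x.
Proof. by rewrite [RHS]sum_pairI2; apply: eq_bigr => g _; rewrite ffunE mul1r. Qed.

Lemma grC2_partial_aug_proj C x :
  partial_aug C (grC2_proj 1 x) - partial_aug C (grC2_proj (-1) x) =
  2 * \sum_(g in C) x (g, ord_max).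
Proof. by rewrite -sumrB mulr_sumr; apply: eq_bigr => g _; rewrite !ffunE; ring. Qed.

Section Involution.
Variables (s : R) (s2 : s ^+ 2 = 1).

Lemma grC2_proj_exp x n : grC2_proj s (gr_exp x n) = gr_exp (grC2_proj s x) n.
Proof.
elim: n => [|n IHn]; first exact: grC2_proj_one.
by rewrite /gr_exp /= -!/(gr_exp _ _) grC2_projM // IHn.
Qed.

Lemma grC2_proj_unit x : gr_unit x -> gr_unit (grC2_proj s x).
Proof.
move=> [y [xy yx]]; exists (grC2_proj s y).
by rewrite -!grC2_projM // xy yx grC2_proj_one.
Qed.

Lemma grC2_proj_torsion x : gr_torsion x -> gr_torsion (grC2_proj s x).
Proof. by move=> [n n_gt0 xn]; exists n; rewrite // -grC2_proj_exp xn grC2_proj_one. Qed.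

End Involution.

End GroupRingTimesC2.

Lemma grC2_proj_ZtoQ (gT : finGroupType) (s : int) (x : grElt int (gT * 'I_2)%type) :
  grC2_proj s%:~R (gr_ZtoQ x) = gr_ZtoQ (grC2_proj s x).
Proof. by apply/ffunP => g; rewrite !ffunE intrD intrM. Qed.

Section LiftC2.
Variables (F : numFieldType) (gT : finGroupType).
Implicit Types (x : grElt F (gT * 'I_2)%type) (u w : grElt F gT).

Definition grC2_lift u w : grElt F (gT * 'I_2)%type :=
  [ffun p => if p.2 == ord0 then (u p.1 + w p.1) / 2 else (u p.1 - w p.1) / 2].

Lemma grC2_proj1_lift u w : grC2_proj 1 (grC2_lift u w) = u.
Proof. by apply/ffunP => g; rewrite !ffunE /=; field. Qed.

Lemma grC2_projN1_lift u w : grC2_proj (-1) (grC2_lift u w) = w.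
Proof. by apply/ffunP => g; rewrite !ffunE /=; field. Qed.

Lemma grC2_liftK x : grC2_lift (grC2_proj 1 x) (grC2_proj (-1) x) = x.
Proof.
apply/ffunP => [[g t]]; rewrite !ffunE /=.
by have [->|->] /= := I2_cases t; field.
Qed.

Lemma grC2_lift_of g (t : 'I_2) :
  grC2_lift (gr_of F g) (gr_scale ((-1) ^+ t) (gr_of F g)) = gr_of F (g, t).
Proof. by rewrite -[RHS]grC2_liftK !grC2_proj_of expr1n gr_scale1. Qed.

Lemma grC2_lift_mul u w u' w' :
  gr_mul (grC2_lift u w) (grC2_lift u' w') = grC2_lift (gr_mul u u') (gr_mul w w').
Proof.
have sq1 : (1 : F) ^+ 2 = 1 by rewrite expr1n.
have sqN1 : (-1 : F) ^+ 2 = 1 by rewrite sqrrN expr1n.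
rewrite -[LHS]grC2_liftK (grC2_projM _ _ sq1) (grC2_projM _ _ sqN1).
by rewrite !grC2_proj1_lift !grC2_projN1_lift.
Qed.

Lemma grC2_lift_one : grC2_lift (gr_one F gT) (gr_one F gT) = gr_one F (gT * 'I_2)%type.
Proof. by rewrite -{1}(grC2_proj_one gT 1) -(grC2_proj_one gT (-1)) grC2_liftK. Qed.

Lemma grC2_similar_lift x u w :
  gr_similar (grC2_proj 1 x) u -> gr_similar (grC2_proj (-1) x) w ->
  gr_similar x (grC2_lift u w).
Proof.
move=> [u1 [v1 [uv1 vu1 <-]]] [u2 [v2 [uv2 vu2 <-]]].
exists (grC2_lift u1 u2), (grC2_lift v1 v2); rewrite -{1}[x]grC2_liftK !grC2_lift_mul.
by rewrite uv1 uv2 vu1 vu2 grC2_lift_one.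
Qed.

End LiftC2.

Lemma grC2_similar_class (gT : finGroupType) (X : grElt int (gT * 'I_2)%type)
    (e : int) (g h : gT) :
  e ^+ 2 = 1 ->
  gr_similar (gr_ZtoQ (grC2_proj 1 X)) (gr_of rat g) ->
  gr_similar (gr_ZtoQ (gr_scale e (grC2_proj (-1) X))) (gr_of rat h) ->
  h \in (g ^: [set: gT])%g.
Proof.
move=> e2 simP simN; apply: contraT => gNh.
have nC := class_norm g [set: gT].
have := grC2_partial_aug_proj (g ^: [set: gT])%g X.
rewrite (partial_aug_ZtoQ_similar nC simP) class_refl.
rewrite -[grC2_proj (-1) X](gr_scaleK _ e2) partial_aug_scale.
rewrite (partial_aug_ZtoQ_similar nC simN) (negbTE gNh) mulr0 subr0.
lia.
Qed.

Theorem proposition2 (gT : finGroupType) :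
  torsion_units_rationally_trivial gT ->
  torsion_units_rationally_trivial (gT * 'I_2)%type.
Proof.
move=> triv_G X [unitX augX] torX.
have [g simP] : exists g, gr_similar (gr_ZtoQ (grC2_proj 1 X)) (gr_of rat g).
  apply/QG_conj_to_groupP/triv_G; last exact: grC2_proj_torsion (expr1n _ 2) _ torX.
  by split; [exact: grC2_proj_unit (expr1n _ 2) _ unitX | rewrite grC2_proj_aug].
set Xm := grC2_proj (-1) X.
have sqN1 : (-1 : int) ^+ 2 = 1 by [].
have unitXm : gr_unit Xm := grC2_proj_unit sqN1 unitX.
have [t augXm] := gr_aug_sign unitXm.
have e2 : gr_aug Xm ^+ 2 = 1 by rewrite augXm sqrr_sign.
have [h simN] : exists h, gr_similar (gr_ZtoQ (gr_scale (gr_aug Xm) Xm)) (gr_of rat h).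
  apply/QG_conj_to_groupP/triv_G; first exact: in_VZ_scale_aug.
  exact: gr_torsion_scale e2 (grC2_proj_torsion sqN1 torX).
have /imsetP[y _ def_h] := grC2_similar_class e2 simP simN; rewrite def_h in simN.
apply/QG_conj_to_groupP; exists (g, t); rewrite -grC2_lift_of.
apply: grC2_similar_lift; first by rewrite (grC2_proj_ZtoQ 1).
rewrite (grC2_proj_ZtoQ (-1)) -/Xm -[Xm](gr_scaleK _ e2) gr_ZtoQ_scale.
rewrite {1}augXm rmorph_sign.
exact: gr_similar_trans (gr_similar_scale _ simN)
                        (gr_similar_scale _ (gr_similar_ofJ _ g y)).
Qed.
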